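(* Let $\lambda$ and $\lambda'$ be Young diagrams with $n$ boxes such that $\lambda'\ge\lambda$. Then $M_{\lambda',2l}\ge M_{\lambda,2l}$ for every integer $l\ge 0$.
   Context: For a Young diagram $\lambda=(\lambda_1,\dots,\lambda_m)$ with $\lambda_1\ge\dots\ge\lambda_m\ge 1$, $\sum\lambda_i=n$, and an integer $l\ge 0$, define $M_{\lambda,2l}=\sum_{j=1}^m\big\{(\lambda_j-j)^l(\lambda_j-j+1)^l-j^l(j-1)^l\big\}$. For Young diagrams $\lambda,\lambda'$ with $n$ boxes, $\lambda'\ge\lambda$ means that $\lambda'$ can be obtained from $\lambda$ by a finite sequence of moves, each of which removes the last box of some row $b$ and appends it to the end of some row $a<b$, every intermediate shape being a Young diagram (i.e. moving boxes up to the right; the dominance order). *)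

From HB Require Import structures.
From mathcomp Require Import all_boot all_order all_algebra.
From Stdlib Require Import Relations.
Set Implicit Arguments. Unset Strict Implicit. Unset Printing Implicit Defensive.
Import Order.TTheory GRing.Theory Num.Theory.

(* A Young diagram is the list of its row lengths [:: l_1; ...; l_m]
   (row j of the paper is index j-1 here), weakly decreasing, all rows >= 1. *)
Definition young (lam : seq nat) : bool :=
  sorted geq lam && all (fun r => 0 < r) lam.

Definition boxes (lam : seq nat) : nat := sumn lam.

(* M_{lam,2l} = sum_{j=1}^m ((lam_j - j)^l (lam_j - j + 1)^l - j^l (j-1)^l),
   computed in int; with 0-based index i = j - 1. *)
Definition M (lam : seq nat) (l : nat) : int :=
  \sum_(i < size lam)
    (((nth 0 lam i)%:Z - (i.+1)%:Z) ^+ l * ((nth 0 lam i)%:Z - i%:Z) ^+ l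
     - (i.+1)%:Z ^+ l * (i%:Z) ^+ l)%R.

(* One move: remove the last box of row b and append it to row a < b
   (0-based indices), the result being again a Young diagram.  Rows of
   length 0 are not stored, so a row emptied by the move disappears. *)
Definition move (lam lam' : seq nat) : Prop :=
  exists a b : nat, [/\ a < b, b < size lam, young lam' &
    forall i, nth 0 lam' i = nth 0 lam i + (i == a) - (i == b)].

Definition dom_ge (lam' lam : seq nat) : Prop :=
  clos_refl_trans_1n (seq nat) move lam lam'.

From HB Require Import structures.
From mathcomp Require Import all_boot all_order all_algebra.
From mathcomp Require Import zify ring.
Set Implicit Arguments. Unset Strict Implicit. Unset Printing Implicit Defensive.
Import Order.TTheory GRing.Theory Num.Theory.
Local Open Scope ring_scope.

(* Put phi_l(c) = (c(c+1))^l for an integer c.  Row i (0-based) of length v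
   contributes phi_l(v - i - 1) - phi_l(i) to M; the symmetry
   phi_l(-1 - c) = phi_l(c) makes an empty row contribute 0, so M may be
   computed over any number of rows at least the length of the diagram.
   A move lengthening row a from v to v + 1 and shortening row b from w to
   w - 1 changes M by dphi_l(v - a) - dphi_l(w - b - 1), where
   dphi_l(t) = phi_l(t) - phi_l(t - 1).  Since a < b and w <= v, it suffices
   that dphi_l is nondecreasing on the integers.  By the symmetry of phi_l,
   dphi_l is odd, so it is enough to compare dphi_l(t) and dphi_l(t + 1) for
   t >= 0; there the points (t-1)t <= t(t+1) <= (t+1)(t+2) have increasing
   gaps, and a discrete convexity inequality for powers on [0, +oo) applies.
   The theorem follows by induction along the chain of moves. *)

Lemma powr_increment_le (R : numDomainType) (x y z : R) (l : nat) :
  0 <= x -> x <= y -> y <= z -> y - x <= z - y ->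
  y ^+ l - x ^+ l <= z ^+ l - y ^+ l.
Proof.
move=> x_ge0 le_xy le_yz gaps.
have y_ge0 : 0 <= y by apply: le_trans le_xy.
have z_ge0 : 0 <= z by apply: le_trans le_yz.
have powr_le k (u v : R) : 0 <= u -> u <= v -> u ^+ k <= v ^+ k.
  by move=> u_ge0 le_uv; apply: lerXn2r; rewrite ?nnegrE // (le_trans u_ge0).
elim: l => [|l IH]; first by rewrite !expr0 !subrr.
have incrS (u v : R) : v ^+ l.+1 - u ^+ l.+1 = v * (v ^+ l - u ^+ l) + (v - u) * u ^+ l.
  by rewrite !exprS mulrBr mulrBl addrA subrK.
rewrite !incrS; apply: lerD; apply: ler_pM => //.
- by rewrite subr_ge0 powr_le.
- by rewrite subr_ge0.
- exact: exprn_ge0.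
- exact: powr_le.
Qed.

Definition phi (l : nat) (c : int) : int := (c * (c + 1)) ^+ l.
Definition dphi (l : nat) (t : int) : int := phi l t - phi l (t - 1).

Lemma phi_sym (l : nat) (c : int) : phi l (-1 - c) = phi l c.
Proof. by rewrite /phi; congr (_ ^+ _); ring. Qed.

Lemma dphiN (l : nat) (t : int) : dphi l (- t) = - dphi l t.
Proof.
have phiN : phi l (- t) = phi l (t - 1) by rewrite -phi_sym; congr phi; ring.
have phiN1 : phi l (- t - 1) = phi l t by rewrite -[RHS]phi_sym; congr phi; ring.
by rewrite /dphi phiN phiN1 opprB.
Qed.

Lemma dphi_step_ge0 (l : nat) (t : int) : 0 <= t -> dphi l t <= dphi l (t + 1).
Proof.
move=> t_ge0; rewrite /dphi addrK /phi.
have -> : t - 1 + 1 = t by ring.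
apply: powr_increment_le; nia.
Qed.

Lemma dphi_step (l : nat) (t : int) : dphi l t <= dphi l (t + 1).
Proof.
have [t_ge0|t_lt0] := leP 0 t; first exact: dphi_step_ge0.
have -> : t = - ((- t - 1) + 1) by ring.
have -> : - ((- t - 1) + 1) + 1 = - (- t - 1) by ring.
by rewrite !dphiN lerN2; apply: dphi_step_ge0; lia.
Qed.

Lemma dphi_mono (l : nat) (p q : int) : q <= p -> dphi l q <= dphi l p.
Proof.
rewrite -subr_ge0 => /gez0_abs ediff.
have -> : p = q + `|p - q|%N%:Z by rewrite ediff addrC subrK.
elim: `|p - q|%N => [|k IH]; first by rewrite addr0.
by apply: le_trans IH _; rewrite -addn1 PoszD addrA dphi_step.
Qed.

Definition row_term (l v i : nat) : int := phi l (v%:Z - i%:Z - 1) - phi l i%:Z.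

Lemma M_summandE (l v i : nat) :
  ((v%:Z - (i.+1)%:Z) ^+ l * (v%:Z - i%:Z) ^+ l - (i.+1)%:Z ^+ l * (i%:Z) ^+ l)
  = row_term l v i.
Proof.
rewrite /row_term /phi !exprMn [(i.+1)%:Z ^+ l * _]mulrC.
by congr (_ ^+ l * _ ^+ l - _ ^+ l * _ ^+ l); lia.
Qed.

Lemma row_term0 (l i : nat) : row_term l 0 i = 0.
Proof.
rewrite /row_term -[phi l i%:Z]phi_sym.
by apply/eqP; rewrite subr_eq0; apply/eqP; congr phi; ring.
Qed.

Lemma M_padded (l : nat) (lam : seq nat) (N : nat) : (size lam <= N)%N ->
  M lam l = \sum_(i < N) row_term l (nth 0 lam i) i.
Proof.
move=> le_sizeN.
rewrite /M (eq_bigr (fun i : 'I__ => row_term l (nth 0 lam i) i)) => [|i _];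
  last exact: M_summandE.
rewrite (big_ord_widen N (fun i => row_term l (nth 0 lam i) i)) // big_mkcond.
apply: eq_bigr => i _.
by case: ltnP => // le_size_i; rewrite nth_default // row_term0.
Qed.

Lemma row_term_succ (l v a : nat) :
  row_term l v.+1 a - row_term l v a = dphi l (v%:Z - a%:Z).
Proof.
rewrite /row_term /dphi opprB addrA subrK.
by congr (phi l _ - phi l _); lia.
Qed.

Lemma row_term_pred (l w b : nat) : (0 < w)%N ->
  row_term l w.-1 b - row_term l w b = - dphi l (w%:Z - b%:Z - 1).
Proof.
move=> w_gt0; rewrite /row_term /dphi opprB addrA subrK opprB.
by congr (phi l _ - phi l _); lia.
Qed.

Lemma M_move_increment (l : nat) (lam lam' : seq nat) (a b : nat) :
  (a < b)%N -> (b < size lam)%N -> (size lam' <= size lam)%N ->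
  (0 < nth 0 lam b)%N ->
  (forall i, nth 0 lam' i = nth 0 lam i + (i == a) - (i == b))%N ->
  M lam' l - M lam l =
    dphi l ((nth 0%N lam a)%:Z - a%:Z) - dphi l ((nth 0%N lam b)%:Z - b%:Z - 1).
Proof.
move=> lt_ab lt_b_size le_size row_b_gt0 rows'.
have lt_a_size : (a < size lam)%N by apply: ltn_trans lt_b_size.
rewrite (M_padded l le_size) (M_padded l (leqnn _)) -sumrB.
rewrite (bigD1 (Ordinal lt_a_size)) // (bigD1 (Ordinal lt_b_size)) /=;
  last by rewrite -val_eqE /= gtn_eqF.
rewrite big1 ?addr0 => [|i /andP[ne_ia ne_ib]]; last first.
  rewrite -!val_eqE /= in ne_ia ne_ib.
  by rewrite rows' (negbTE ne_ia) (negbTE ne_ib) addn0 subn0 subrr.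
rewrite !rows' (ltn_eqF lt_ab) (gtn_eqF lt_ab) !eqxx addn0 addn1 subn0 subn1.
by rewrite row_term_succ row_term_pred.
Qed.

(* A move never creates rows, since the new diagram has no empty rows. *)
Lemma move_size (lam lam' : seq nat) (a b : nat) :
  (a < b)%N -> (b < size lam)%N -> young lam' ->
  (forall i, nth 0 lam' i = nth 0 lam i + (i == a) - (i == b))%N ->
  (size lam' <= size lam)%N.
Proof.
move=> lt_ab lt_b_size /andP[_ /allP rows'_pos] rows'.
rewrite leqNgt; apply/negP => lt_size.
have := rows'_pos _ (mem_nth 0 lt_size).
rewrite rows' nth_default // gtn_eqF ?(ltn_trans lt_ab) // gtn_eqF //.
Qed.

Lemma M_move_le (l : nat) (lam lam' : seq nat) :
  young lam -> move lam lam' -> M lam l <= M lam' l.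
Proof.
case/andP=> sorted_lam /allP rows_pos [a [b [lt_ab lt_b_size young' rows']]].
have lt_a_size : (a < size lam)%N by apply: ltn_trans lt_b_size.
have row_b_gt0 : (0 < nth 0 lam b)%N by apply/rows_pos/mem_nth.
have le_rows : (nth 0 lam b <= nth 0 lam a)%N.
  apply: (sorted_leq_nth _ _ 0 sorted_lam) => //; last exact: ltnW.
  - by move=> y x z /= le_yx le_zy; apply: leq_trans le_zy le_yx.
  - by move=> x /=.
have le_size : (size lam' <= size lam)%N by apply: move_size lt_ab lt_b_size young' rows'.
rewrite -subr_ge0 (M_move_increment l lt_ab lt_b_size le_size row_b_gt0 rows').
by rewrite subr_ge0; apply: dphi_mono; lia.
Qed.

Theorem lemma5p9 (n : nat) (lam lam' : seq nat) :
  young lam -> young lam' -> boxes lam = n -> boxes lam' = n ->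
  dom_ge lam' lam ->
  forall l : nat, (M lam l <= M lam' l)%R.
Proof.
move=> young_lam _ _ _ chain l.
elim: chain young_lam => [lam0 _|lam0 lam1 lam2 mv _ IH young0]; first exact: lexx.
have young1 : young lam1 by case: mv => [a [b [_ _ ? _]]].
exact: le_trans (M_move_le l young0 mv) (IH young1).
Qed.
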